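(* For every set $\mathfrak W$ of bracket patterns, $\bigcup_{w\in\langle\!\langle\mathfrak W\rangle\!\rangle}A(w)=\bigcup_{w\in\mathfrak W}A(w)$. In particular, $\bigcup_{w'\in\langle\!\langle w\rangle\!\rangle}A(w')=A(w)$ for every bracket pattern $w$.
   Context: $\mathbb N=\{1,2,\dots\}$, $\mathbb N_0=\mathbb N\cup\{0\}$. A bracket pattern is a non-empty finite subset $w\subseteq\mathbb N$; $\|w\|:=\max(w)$. For bracket patterns $w,w'$: superposition $w\cup w'$; for $j\in w$ the projection $\cap_j w:=\{i\in w\mid i\le j\}$; the dual $w^\dagger:=\{\|w\|-i\mid i\in\mathbb N_0,\ i<\|w\|,\ i\notin w\}$. A bracket pattern category is a (possibly empty) set of bracket patterns closed under superposition, duals and projections; $\langle\!\langle\mathfrak W\rangle\!\rangle$ is the smallest bracket pattern category containing $\mathfrak W$, and $\langle\!\langle w\rangle\!\rangle:=\langle\!\langle\{w\}\rangle\!\rangle$. The completion of a bracket pattern $w$ is $A(w):=\{j-i\mid j\in w,\ i\in\mathbb N_0,\ i\notin w,\ i<j\}$. *)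

From mathcomp Require Import all_boot.
From mathcomp Require Import finmap.
Set Implicit Arguments. Unset Strict Implicit. Unset Printing Implicit Defensive.
Local Open Scope fset_scope.

Definition is_bp (w : {fset nat}) : Prop := w != fset0 /\ (0 \notin w).

Definition bpnorm (w : {fset nat}) : nat := \max_(i <- w) i.

Definition bproj (j : nat) (w : {fset nat}) : {fset nat} :=
  [fset i in w | (i <= j)%N].

Definition bdual (w : {fset nat}) : {fset nat} :=
  [fset (bpnorm w - i)%N | i in [seq i <- iota 0 (bpnorm w) | i \notin w]].

Definition is_bp_category (C : {fset nat} -> Prop) : Prop :=
  [/\ (forall w, C w -> is_bp w),
      (forall w w', C w -> C w' -> C (w `|` w')),
      (forall w, C w -> C (bdual w))
    & (forall w j, C w -> j \in w -> C (bproj j w))].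

Definition bp_gen (W : {fset nat} -> Prop) : {fset nat} -> Prop :=
  fun w => forall C, is_bp_category C -> (forall v, W v -> C v) -> C w.

Definition completion (w : {fset nat}) : nat -> Prop :=
  fun n => exists j i, j \in w /\ i \notin w /\ (i < j)%N /\ n = (j - i)%N.

From mathcomp Require Import all_boot.
From mathcomp Require Import finmap.
From mathcomp Require Import zify.
Set Implicit Arguments. Unset Strict Implicit. Unset Printing Implicit Defensive.
Local Open Scope fset_scope.

(* None of the three category operations creates new differences: a
   difference j - i taken in w ∪ w' is taken in w or in w'; one taken in a
   projection of w is taken in w; and a difference (N - i) - m in the dual
   (N = ||w||, i ∉ w, m ∉ w†) equals (N - m) - i with N - m ∈ w.  Hence the
   bracket patterns whose completion is covered by the completions of W form a
   bracket pattern category containing W, and so contain <<W>>. *)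

Lemma leq_bpnorm w i : i \in w -> (i <= bpnorm w)%N.
Proof. by move=> wi; exact: leq_bigmax_seq. Qed.

Lemma bpnorm_mem w : w != fset0 -> bpnorm w \in w.
Proof.
case/fset0Pn=> x wx.
have : (bpnorm w == 0%N) || (bpnorm w \in w).
  rewrite /bpnorm big_seq.
  apply: (big_ind (fun m => (m == 0%N) || (m \in w))) => [//|m1 m2 hm1 hm2 /=|i ->].
  - by case: leqP.
  - by rewrite orbT.
case/orP=> [/eqP N0|//]; move: (leq_bpnorm wx); rewrite N0 leqn0 => /eqP x0.
by rewrite -x0.
Qed.

Lemma bdualP w k :
  reflect (exists2 i, (i < bpnorm w)%N /\ i \notin w & k = (bpnorm w - i)%N)
          (k \in bdual w).
Proof.
rewrite /bdual; apply: (iffP (imfsetP _ _ _ _)) => [[i]|[i [iN iw] ->]].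
  by rewrite /= mem_filter mem_iota add0n => /andP[iw iN] ->; exists i.
by exists i; rewrite //= mem_filter mem_iota add0n iw iN.
Qed.

Lemma is_bp_fsetU w w' : is_bp w -> is_bp w' -> is_bp (w `|` w').
Proof.
move=> [wn0 w0] [_ w'0].
by split; rewrite ?fsetU_eq0 ?negb_and ?wn0 // inE negb_or w0 w'0.
Qed.

Lemma is_bp_bproj w j : is_bp w -> j \in w -> is_bp (bproj j w).
Proof.
move=> [_ w0] wj; split; last by rewrite !inE (negbTE w0).
by apply/fset0Pn; exists j; rewrite !inE wj leqnn.
Qed.

Lemma is_bp_bdual w : is_bp w -> is_bp (bdual w).
Proof.
move=> [wn0 w0].
have N_gt0 : (0 < bpnorm w)%N.
  by rewrite lt0n; apply: contraNneq w0 => <-; exact: bpnorm_mem.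
split.
  by apply/fset0Pn; exists (bpnorm w); apply/bdualP; exists 0%N; rewrite ?subn0.
by apply/bdualP => -[i [iN _] /eqP]; rewrite eq_sym subn_eq0 leqNgt iN.
Qed.

Lemma completion_fsetU w w' n :
  completion (w `|` w') n -> completion w n \/ completion w' n.
Proof.
move=> [j [i [+ [+ [ij ->]]]]]; rewrite !inE negb_or => /orP[] wj /andP[wi w'i].
  by left; exists j, i.
by right; exists j, i.
Qed.

Lemma completion_bproj j w n : completion (bproj j w) n -> completion w n.
Proof.
move=> [k [i [+ [+ [ik ->]]]]]; rewrite !inE /= => /andP[wk kj] iw.
exists k, i; do !split => //; apply: contra iw => wi.
by rewrite wi (leq_trans (ltnW ik) kj).
Qed.

Lemma completion_bdual w n : w != fset0 -> completion (bdual w) n -> completion w n.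
Proof.
move=> wn0 [_ [m [/bdualP[i [iN iw] ->] [m_dual [m_lt ->]]]]].
set N := bpnorm w in iN m_lt m_dual *.
have Nm_w : (N - m)%N \in w.
  case: m m_dual m_lt => [|m] m_dual m_lt; first by rewrite subn0 bpnorm_mem.
  apply: contraNT m_dual => Nm_w; apply/bdualP.
  by exists (N - m.+1)%N; [split=> //; lia | lia].
by exists (N - m)%N, i; do !split => //; lia.
Qed.

Definition completion_covered (W : {fset nat} -> Prop) (w : {fset nat}) : Prop :=
  forall n, completion w n -> exists v, W v /\ completion v n.

Lemma is_bp_category_covered W :
  is_bp_category (fun w => is_bp w /\ completion_covered W w).
Proof.
split.
- by move=> w [].
- move=> w w' [bp_w cov_w] [bp_w' cov_w']; split; first exact: is_bp_fsetU.
  by move=> n /completion_fsetU[/cov_w|/cov_w'].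
- move=> w [bp_w cov_w]; split; first exact: is_bp_bdual.
  by move=> n /(completion_bdual bp_w.1) /cov_w.
- move=> w j [bp_w cov_w] wj; split; first exact: is_bp_bproj.
  by move=> n /completion_bproj /cov_w.
Qed.

Lemma bp_gen_completion (W : {fset nat} -> Prop) :
  (forall w, W w -> is_bp w) ->
  forall n, (exists w, bp_gen W w /\ completion w n) <->
            (exists w, W w /\ completion w n).
Proof.
move=> bp_W n; split=> [[w [gen_w Aw]]|[w [Ww Aw]]]; last first.
  by exists w; split=> // C _; apply.
have [_ cov_w] : is_bp w /\ completion_covered W w.
  apply: gen_w (is_bp_category_covered W) _ => v Wv.
  by split=> [|m Am]; [exact: bp_W | exists v].
exact: cov_w.
Qed.

Theorem proposition7p6 :
  (forall (W : {fset nat} -> Prop),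
     (forall w, W w -> is_bp w) ->
     forall n : nat,
       (exists w, bp_gen W w /\ completion w n) <->
       (exists w, W w /\ completion w n))
  /\
  (forall w : {fset nat}, is_bp w ->
     forall n : nat,
       (exists w', bp_gen (fun v => v = w) w' /\ completion w' n) <->
       completion w n).
Proof.
split; first exact: bp_gen_completion.
move=> w bp_w n; rewrite bp_gen_completion; last by move=> v ->.
by split=> [[v [-> Av]] | Aw]; last exists w.
Qed.
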